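(* Let $\mathcal M=(S,L,\tau,\ell)$ be an LMC (possibly with infinitely many states) and $s,t\in S$. Then $d(s,t)<1$ if and only if there is a policy $T$ with $\mathcal R^T_{\mathcal M}((s,t),S^2_1)<1$. In particular, if there is a policy $T$ with $\mathcal R^T_{\mathcal M}((s,t),S^2_0)>0$, then $d(s,t)<1$.
   Context: An LMC $\mathcal M=(S,L,\tau,\ell)$ has a nonempty countable state set $S$, finite label set $L$, finitely-branching transition function $\tau:S\to\mathrm{Distr}(S)$ and labelling $\ell$. The probabilistic bisimilarity distance $d$ is the least fixed point of $\Delta(e)(s,t)=1$ if $\ell(s)\ne\ell(t)$ and $\Delta(e)(s,t)=\min_{\omega\in\Omega(\tau(s),\tau(t))}\sum_{u,v}\omega(u,v)e(u,v)$ otherwise, where $\Omega(\mu,\nu)$ is the set of couplings (distributions on $S\times S$ with marginals $\mu,\nu$). Probabilistic bisimilarity $\sim$ is the largest equivalence $R$ on $S$ such that $(s,t)\in R$ implies $\ell(s)=\ell(t)$ and $\tau(s)(E)=\tau(t)(E)$ for every $R$-class $E$. Partition $S^2$ into $S^2_0=\{(s,t):s\sim t\}$, $S^2_1=\{(s,t):\ell(s)\ne\ell(t)\}$, $S^2_?=S^2\setminus(S^2_0\cup S^2_1)$. A policy is a map $T:S^2_?\to\mathrm{Distr}(S^2)$ with $T(s,t)\in\Omega(\tau(s),\tau(t))$. The Markov chain $\mathcal C^T_{\mathcal M}$ on $S^2$ has every pair in $S^2_0\cup S^2_1$ absorbing and from $(u,v)\in S^2_?$ moves to $(x,y)$ with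 probability $T(u,v)(x,y)$. $\mathcal R^T_{\mathcal M}((s,t),Z)$ is the probability that $\mathcal C^T_{\mathcal M}$ started in $(s,t)$ reaches $Z\subseteq S^2$. *)

From HB Require Import structures.
From mathcomp Require Import all_boot all_order all_algebra.
From mathcomp Require Import boolp classical_sets functions cardinality fsbigop reals.
Set Implicit Arguments. Unset Strict Implicit. Unset Printing Implicit Defensive.
Import Order.TTheory GRing.Theory Num.Theory.
Local Open Scope classical_set_scope.
Local Open Scope ring_scope.

Section LMC.
Variables (R : realType) (S : countType) (L : finType).

Definition is_distr (T : choiceType) (mu : T -> R) : Prop :=
  (forall x, 0 <= mu x) /\ finite_set [set x | mu x != 0] /\
  \sum_(x \in [set: T]) mu x = 1.

Definition coupling (mu nu : S -> R) (w : S * S -> R) : Prop :=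
  is_distr w /\
  (forall u, \sum_(v \in [set: S]) w (u, v) = mu u) /\
  (forall v, \sum_(u \in [set: S]) w (u, v) = nu v).

Variables (tau : S -> S -> R) (ell : S -> L).

(* The operator Delta on e : S -> S -> R. The min over couplings is written
   as an infimum (the minimum is attained, Omega being a compact polytope). *)
Definition Delta (e : S -> S -> R) (s t : S) : R :=
  if ell s != ell t then 1
  else inf [set \sum_(p \in [set: S * S]) w p * e p.1 p.2
           | w in [set w | coupling (tau s) (tau t) w]].

Definition bounded01 (e : S -> S -> R) : Prop := forall s t, 0 <= e s t <= 1.
Definition is_bisim_distance (d : S -> S -> R) : Prop :=
  [/\ bounded01 d, (forall s t, Delta d s t = d s t) &
      forall e, bounded01 e -> (forall s t, Delta e s t = e s t) ->
      forall s t, d s t <= e s t].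

Definition prob_bisim (Rb : S -> S -> Prop) : Prop :=
  [/\ (forall s, Rb s s), (forall s t, Rb s t -> Rb t s),
      (forall s t u, Rb s t -> Rb t u -> Rb s u) &
      forall s t, Rb s t -> ell s = ell t /\
        forall c, \sum_(x \in [set x | Rb c x]) tau s x =
                  \sum_(x \in [set x | Rb c x]) tau t x].
Definition bisimilar (s t : S) : Prop := exists Rb, prob_bisim Rb /\ Rb s t.

Definition S2_0 : set (S * S) := [set p | bisimilar p.1 p.2].
Definition S2_1 : set (S * S) := [set p | ell p.1 != ell p.2].
Definition S2_q : set (S * S) := ~` (S2_0 `|` S2_1).

Definition is_policy (T : S * S -> S * S -> R) : Prop :=
  forall p, S2_q p -> coupling (tau p.1) (tau p.2) (T p).

(* Probability that the chain C^T, started in p, reaches Z within n steps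
   (pairs outside S2_q are absorbing). *)
Fixpoint reach_n (T : S * S -> S * S -> R) (Z : set (S * S)) (n : nat)
    (p : S * S) : R :=
  if `[< Z p >] then 1 else
  match n with
  | 0 => 0
  | n'.+1 => if `[< S2_q p >]
             then \sum_(q \in [set: S * S]) T p q * reach_n T Z n' q
             else 0
  end.

Definition reach (T : S * S -> S * S -> R) (Z : set (S * S)) (p : S * S) : R :=
  sup (range (fun n => reach_n T Z n p)).

End LMC.

(* For any policy T, the probability r of reaching S2_1 is a bounded pre-fixed point
   of Delta: it is 1 on S2_1, on a bisimilar pair a coupling supported on bisimilar
   pairs shows that Delta r = 0 = r, and elsewhere T itself is a coupling whose
   expected value of r is at most r.  As d is the least fixed point, d <= r, which
   gives the "if" direction and, since reaching S2_0 and reaching S2_1 are disjoint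
   events, the last claim.  Conversely, choosing at every pair a coupling that attains
   the minimum in Delta d (it exists because the couplings of two finitely supported
   distributions form a compact polytope) yields a policy whose reachability
   probabilities of S2_1 are bounded by d. *)

From HB Require Import structures.
From mathcomp Require Import all_boot all_order all_algebra finmap lra.
From mathcomp Require Import boolp classical_sets functions cardinality fsbigop reals.
From mathcomp Require Import topology normedtype derive.
Import Order.TTheory GRing.Theory Num.Theory.
Import numFieldNormedType.Exports.
Local Open Scope classical_set_scope.
Local Open Scope ring_scope.
Set Implicit Arguments. Unset Strict Implicit. Unset Printing Implicit Defensive.

Section FiniteSupport.
Variables (R : realType) (T : choiceType).
Implicit Types (f g w : T -> R) (r : seq T) (X : set T).

Definition fsupp f : {fset T} := fset_set [set x | f x != 0].

Lemma mem_fsupp f x : finite_set [set x | f x != 0] -> (x \in fsupp f) = (f x != 0).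
Proof. by move=> fin; rewrite /fsupp in_fset_set //; apply/idP/idP; rewrite in_setE. Qed.

Lemma fsum_seq f r : uniq r -> (forall x, f x != 0 -> x \in r) ->
  \sum_(x \in [set: T]) f x = \sum_(x <- r) f x.
Proof.
move=> ur fr; rewrite -(fsbig_widen [set` r] setT f) //; first by rewrite -fsbig_seq.
by move=> y [_ /= yr]; apply/eqP; apply: contraNT (fr y) _; apply/negP.
Qed.

Lemma ler_fsum_term f X x : finite_set [set x | f x != 0] ->
  (forall y, 0 <= f y) -> X x -> f x <= \sum_(y \in X) f y.
Proof.
move=> fin f0 Xx; have [->|fx] := eqVneq (f x) 0; first exact: fsumr_ge0.
rewrite -(fsbig_widen (X `&` [set y | f y != 0]) X) //; last first.
  by move=> y [Xy /= /not_andP[//|/negP]]; rewrite negbK => /eqP.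
rewrite (fsbigD1 x) ?lerDl ?fsumr_ge0 //.
by apply: sub_finite_set fin => y [].
Qed.

Definition expect w f : R := \sum_(x \in [set: T]) w x * f x.

Section Expectation.
Variable w : T -> R.
Hypothesis wd : is_distr w.

Lemma expect_fsupp f : expect w f = \sum_(x <- fsupp w) w x * f x.
Proof.
have [_ [fin _]] := wd; rewrite /expect (@fsum_seq _ (fsupp w)) ?fset_uniq // => x /=.
by rewrite mulf_eq0 negb_or mem_fsupp // => /andP[].
Qed.

Lemma le_expect f g : (forall x, w x != 0 -> f x <= g x) -> expect w f <= expect w g.
Proof.
have [w0 [fin _]] := wd; move=> fg; rewrite !expect_fsupp big_seq [leRHS]big_seq.
by apply: ler_sum => x; rewrite mem_fsupp // => wx; rewrite ler_wpM2l ?fg.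
Qed.

Lemma expect_ge0 f : (forall x, 0 <= f x) -> 0 <= expect w f.
Proof. by move=> f0; apply: fsumr_ge0 => x _; rewrite mulr_ge0 ?wd.1. Qed.

Lemma expect_cst c : expect w (fun=> c) = c.
Proof. by rewrite /expect -mulr_fsuml wd.2.2 mul1r. Qed.

Lemma expect_le1 f : (forall x, f x <= 1) -> expect w f <= 1.
Proof. by move=> f1; rewrite -[leRHS](expect_cst 1); apply: le_expect. Qed.

Lemma expectD f g : expect w (fun x => f x + g x) = expect w f + expect w g.
Proof. by rewrite !expect_fsupp -big_split; apply: eq_bigr => x _; rewrite mulrDr. Qed.

End Expectation.
End FiniteSupport.

Lemma sup_approx_seq (R : realType) (I : eqType) (u : I -> nat -> R) (r : seq I)
    (eps : R) : 0 < eps -> (forall i, has_sup (range (u i))) ->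
  (forall i, {homo u i : m n / (m <= n)%N >-> m <= n}) ->
  exists N, forall i, i \in r -> sup (range (u i)) - eps <= u i N.
Proof.
move=> eps0 hs homo; elim: r => [|j r [N HN]]; first by exists 0%N.
have [_ [n _ <-] jn] := sup_adherent eps0 (hs j).
exists (maxn N n) => i; rewrite inE => /orP[/eqP->|/HN iN].
  by apply: le_trans (ltW jn) (homo _ _ _ _); rewrite leq_maxr.
by apply: le_trans iN (homo _ _ _ _); rewrite leq_maxl.
Qed.

Lemma fsum_pair (R : realType) (T1 T2 : choiceType) (f : T1 * T2 -> R)
    (X : set T1) (Y : set T2) : finite_set X -> finite_set Y ->
  (forall p, f p != 0 -> X p.1 /\ Y p.2) ->
  \sum_(p \in [set: T1 * T2]) f p = \sum_(u \in [set: T1]) \sum_(v \in [set: T2]) f (u, v).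
Proof.
move=> Xf Yf fXY; have f0 p : ~ (X p.1 /\ Y p.2) -> f p = 0.
  by move=> nXY; apply/eqP; apply: contra_notT nXY => /negP/negP/fXY.
rewrite -(fsbig_widen (X `*` Y) setT) //; last by move=> p [_ /f0].
transitivity (\sum_(u \in X) \sum_(v \in Y) f (u, v));
  first by rewrite pair_fsbig //; apply: eq_fsbigr => -[].
rewrite -(fsbig_widen X setT) //; last first.
  by move=> u [_ /= nX]; apply: fsbig1 => v _; apply: f0 => -[].
by apply: eq_fsbigr => u _; rewrite -(fsbig_widen Y setT) // => v [_ /= nY]; apply: f0 => -[].
Qed.

Section Couplings.
Variables (R : realType) (S : countType).
Implicit Types (mu nu : S -> R) (w : S * S -> R).

Lemma coupling_supp mu nu w : coupling mu nu w ->
  forall p, w p != 0 -> mu p.1 != 0 /\ nu p.2 != 0.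
Proof.
case=> [[w0 [wfin _]] [row col]] [u v] /= wn.
have wp : 0 < w (u, v) by rewrite lt0r wn w0.
have fin_sec (g : S -> S * S) : injective g -> finite_set [set y | w (g y) != 0].
  by move=> ginj; apply: finite_preimage wfin => ? ? _ _; exact: ginj.
split; apply: lt0r_neq0; apply: lt_le_trans wp _.
  rewrite -row; apply: (ler_fsum_term (f := fun y => w (u, y))) => //.
  by apply: fin_sec => y y' [].
rewrite -col; apply: (ler_fsum_term (f := fun y => w (y, v))) => //.
by apply: fin_sec => y y' [].
Qed.

Lemma coupling_of_marginals mu nu w : is_distr mu -> is_distr nu ->
  (forall p, 0 <= w p) -> (forall p, w p != 0 -> mu p.1 != 0 /\ nu p.2 != 0) ->
  (forall u, \sum_(v \in [set: S]) w (u, v) = mu u) ->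
  (forall v, \sum_(u \in [set: S]) w (u, v) = nu v) -> coupling mu nu w.
Proof.
move=> [_ [muf mu1]] [_ [nuf _]] w0 ws row col.
have wf : finite_set [set p | w p != 0].
  by apply: sub_finite_set (finite_setX muf nuf) => p /ws.
split=> //; split=> //; split=> //.
by rewrite (fsum_pair muf nuf ws); under eq_fsbigr do rewrite row.
Qed.

Lemma coupling_prod mu nu : is_distr mu -> is_distr nu ->
  coupling mu nu (fun p => mu p.1 * nu p.2).
Proof.
move=> mud nud; apply: coupling_of_marginals => //.
- by move=> p; rewrite mulr_ge0 ?mud.1 ?nud.1.
- by move=> p; rewrite mulf_eq0 negb_or => /andP.
- by move=> u /=; rewrite -mulr_fsumr nud.2.2 mulr1.
- by move=> v /=; rewrite -mulr_fsuml mud.2.2 mul1r.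
Qed.

End Couplings.

Lemma fsum_fset (R : realType) (T : choiceType) (h : T -> R) (X : {fset T}) :
  (forall x, h x != 0 -> x \in X) -> \sum_(x \in [set: T]) h x = \sum_(i : X) h (val i).
Proof. by move=> hX; rewrite (fsum_seq (fset_uniq X)) // big_seq_fsetE. Qed.

Lemma fsum_fsetX (R : realType) (T1 T2 : choiceType) (h : T1 * T2 -> R)
    (X : {fset T1}) (Y : {fset T2}) :
  (forall p, h p != 0 -> p.1 \in X /\ p.2 \in Y) ->
  \sum_(p \in [set: T1 * T2]) h p = \sum_(ij : X * Y) h (val ij.1, val ij.2).
Proof.
move=> hXY; rewrite (@fsum_pair _ _ _ _ [set` X] [set` Y]) ?finite_fset //.
rewrite (fsum_fset (X := X)) => [|u]; last first.
  by move=> /(@fsbigN1 _ _ _ _ _ setT (fun u v => h (u, v)) u)[v _ /hXY[]].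
transitivity (\sum_(i : X) \sum_(j : Y) h (val i, val j)); last by rewrite pair_bigA.
by apply: eq_bigr => i _; rewrite (fsum_fset (X := Y)) // => v /hXY[].
Qed.

Section UnitBoxMinimum.
Variables (R : realType) (I : finType).
Local Notation V := {ptws I -> R}.

Lemma continuous_sum (X : Type) (r : seq X) (g : X -> V -> R) :
  (forall x, continuous (g x)) -> continuous (fun f => \sum_(x <- r) g x f).
Proof.
move=> gc; elim: r => [|x r IH].
  have -> : (fun f : V => \sum_(x <- [::]) g x f) = fun=> 0.
    by apply: funext => f; rewrite big_nil.
  exact: cst_continuous.
have -> : (fun f : V => \sum_(y <- x :: r) g y f) = fun f => g x f + \sum_(y <- r) g y f.
  by apply: funext => f; rewrite big_cons.
by move=> f; apply: continuousD; [exact: gc|exact: IH].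
Qed.

Lemma continuous_coord (i : I) : continuous (fun f : V => f i).
Proof. exact: (@proj_continuous I (fun=> R) i). Qed.

Lemma closed_eqs (J : Type) (phi : J -> V -> R) (k : J -> R) :
  (forall j, continuous (phi j)) -> closed [set f | forall j, phi j f = k j].
Proof.
move=> phic; have -> : [set f | forall j, phi j f = k j] =
    \bigcap_(j in [set: J]) (phi j @^-1` [set k j]).
  by apply/seteqP; split => f /= fk j; [move=> _|]; exact: fk.
apply: closed_bigI => j _; apply: preimage_closed; last exact: closed_eq.
by move=> f _; exact: phic.
Qed.

Lemma unit_box_argmin (M : set V) (G : V -> R) : closed M -> continuous G ->
  ([set f : V | forall i, 0 <= f i <= 1] `&` M) !=set0 ->
  exists2 f, ([set f : V | forall i, 0 <= f i <= 1] `&` M) f &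
    forall g, ([set f : V | forall i, 0 <= f i <= 1] `&` M) g -> G f <= G g.
Proof.
move=> Mc Gc ne.
have -> : [set f : V | forall i, 0 <= f i <= 1] = [set f | forall i, `[0, 1]%classic (f i)].
  by apply/seteqP; split => f /= f01 i; move: (f01 i); rewrite /= in_itv.
have cK : compact ([set f : V | forall i, `[0, 1]%classic (f i)] `&` M).
  by apply: compact_closedI Mc; exact: tychonoff (fun=> @segment_compact R 0 1).
have [f fK fmin] := compact_EVT_min ne cK (continuous_subspaceT Gc).
by exists f; [rewrite inE in fK | move=> g Kg; apply: fmin; rewrite inE].
Qed.

End UnitBoxMinimum.

Section OptimalCoupling.
Variables (R : realType) (S : countType) (mu nu : S -> R).
Hypotheses (mud : is_distr mu) (nud : is_distr nu).
Local Notation A := (fsupp mu).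
Local Notation B := (fsupp nu).

(* A coupling of [mu] and [nu] lives on [fsupp mu * fsupp nu], so couplings are
   tables over that finite type; they form a compact polytope on which a linear
   cost attains its minimum. *)
Definition marginal_tables : set {ptws A * B -> R} :=
  [set f | forall i, \sum_(j : B) f (i, j) = mu (val i)] `&`
  [set f | forall j, \sum_(i : A) f (i, j) = nu (val j)].

Definition table (w : S * S -> R) : {ptws A * B -> R} := fun ij => w (val ij.1, val ij.2).

Definition of_table (f : A * B -> R) (p : S * S) : R :=
  \sum_(ij | (val ij.1, val ij.2) == p) f ij.

Lemma of_tableK f i j : of_table f (val i, val j) = f (i, j).
Proof.
by rewrite /of_table (big_pred1 (i, j)) // => -[i' j']; rewrite /= !xpair_eqE !val_eqE.
Qed.

Lemma of_table_supp f p : of_table f p != 0 -> p.1 \in A /\ p.2 \in B.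
Proof.
rewrite /of_table.
have [[i j] /eqP <- _|none] := pickP (fun ij : A * B => (val ij.1, val ij.2) == p).
  by split; apply: valP.
by rewrite big_pred0 ?eqxx.
Qed.

Lemma coupling_fsupp w p : coupling mu nu w -> w p != 0 -> p.1 \in A /\ p.2 \in B.
Proof.
have [_ [muf _]] := mud; have [_ [nuf _]] := nud.
by move=> Cw /(coupling_supp Cw)[]; rewrite -!mem_fsupp.
Qed.

Lemma of_table_coupling f : (forall ij, 0 <= f ij) -> marginal_tables f ->
  coupling mu nu (of_table f).
Proof.
move=> f0 [row col]; have [_ [muf _]] := mud; have [_ [nuf _]] := nud.
apply: coupling_of_marginals => //.
- by move=> p; apply: sumr_ge0.
- by move=> p /of_table_supp[]; rewrite !mem_fsupp.
- move=> u; have [uA|uA] := boolP (u \in A); last first.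
    move: (uA); rewrite mem_fsupp // negbK => /eqP ->.
    by apply: fsbig1 => v _; apply/eqP; apply: contraNT uA => /of_table_supp[].
  pose i : A := FSetSub uA; have -> : u = val i by [].
  rewrite (fsum_fset (X := B)); last by move=> v /of_table_supp[].
  by under eq_bigr do rewrite of_tableK; exact: row.
- move=> v; have [vB|vB] := boolP (v \in B); last first.
    move: (vB); rewrite mem_fsupp // negbK => /eqP ->.
    by apply: fsbig1 => u _; apply/eqP; apply: contraNT vB => /of_table_supp[].
  pose j : B := FSetSub vB; have -> : v = val j by [].
  rewrite (fsum_fset (X := A)); last by move=> u /of_table_supp[].
  by under eq_bigr do rewrite of_tableK; exact: col.
Qed.

Lemma table_coupling w : coupling mu nu w ->
  ([set f | forall ij, 0 <= f ij <= 1] `&` marginal_tables) (table w).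
Proof.
move=> Cw; have [[w0 [wfin w1]] [row col]] := Cw.
split; [move=> ij; rewrite w0 -w1 /= | split => [i|j] /=].
- by apply: (ler_fsum_term (f := w)).
- by rewrite -row (fsum_fset (X := B)) // => v /(coupling_fsupp Cw)[].
- by rewrite -col (fsum_fset (X := A)) // => u /(coupling_fsupp Cw)[].
Qed.

Lemma expect_table w c : coupling mu nu w ->
  expect w c = \sum_(ij : A * B) table w ij * c (val ij.1, val ij.2).
Proof.
move=> Cw; rewrite /expect (fsum_fsetX (X := A) (Y := B)) // => p.
by rewrite mulf_eq0 negb_or => /andP[/(coupling_fsupp Cw)].
Qed.

Lemma exists_optimal_coupling (c : S * S -> R) : exists2 w, coupling mu nu w &
  forall w', coupling mu nu w' -> expect w c <= expect w' c.
Proof.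
pose G (f : {ptws A * B -> R}) := \sum_(ij : A * B) f ij * c (val ij.1, val ij.2).
have Mc : closed marginal_tables.
  by apply: closedI; apply: closed_eqs => k;
    apply: continuous_sum => l; exact: continuous_coord.
have Gc : continuous G.
  apply: continuous_sum => ij f.
  by apply: continuousM; [exact: continuous_coord | exact: cst_continuous].
have ne : ([set f | forall ij, 0 <= f ij <= 1] `&` marginal_tables) !=set0.
  by exists (table (fun p => mu p.1 * nu p.2)); exact/table_coupling/coupling_prod.
have [f0 [f01 f0M] f0min] := unit_box_argmin Mc Gc ne.
have Cf0 : coupling mu nu (of_table f0).
  by apply: of_table_coupling => // ij; case/andP: (f01 ij).
exists (of_table f0) => // w' Cw'.
rewrite (expect_table c Cf0) (expect_table c Cw').
under eq_bigr do rewrite /table of_tableK -surjective_pairing.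
exact: f0min (table_coupling Cw').
Qed.

End OptimalCoupling.

Section LMC.
Variables (R : realType) (S : countType) (L : finType).
Variables (tau : S -> S -> R) (ell : S -> L).
Hypothesis Htau : forall s, is_distr (tau s).
Local Notation Delta := (Delta tau ell).

Lemma Delta_diff_label e a b : ell a != ell b -> Delta e a b = 1.
Proof. by rewrite /Delta => ->. Qed.

Lemma Delta_le_expect e a b w : (forall x y, 0 <= e x y) -> ell a = ell b ->
  coupling (tau a) (tau b) w -> Delta e a b <= expect w (fun p => e p.1 p.2).
Proof.
move=> e0 lab Cw; rewrite /Delta lab eqxx /=; apply: ge_inf; last by exists w.
by exists 0 => _ [w' Cw' <-]; apply: (expect_ge0 (f := fun p => e p.1 p.2) Cw'.1) => p.
Qed.

Lemma Delta_ge e a b c : ell a = ell b ->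
  (forall w, coupling (tau a) (tau b) w -> c <= expect w (fun p => e p.1 p.2)) ->
  c <= Delta e a b.
Proof.
move=> lab cw; rewrite /Delta lab eqxx /=; apply: lb_le_inf; last first.
  by move=> _ [w Cw <-]; exact: cw.
pose w := fun p => tau a p.1 * tau b p.2.
by exists (expect w (fun p => e p.1 p.2)), w => //; exact: coupling_prod.
Qed.

Lemma le_Delta e e' : (forall x y, 0 <= e x y) -> (forall x y, e x y <= e' x y) ->
  forall a b, Delta e a b <= Delta e' a b.
Proof.
move=> e0 ee' a b; have [lab|lab] := eqVneq (ell a) (ell b); last by rewrite !Delta_diff_label.
apply: Delta_ge => // w Cw; apply: le_trans (Delta_le_expect e0 lab Cw) _.
by apply: (le_expect Cw.1) => p _.
Qed.

Lemma Delta_bounded01 e : bounded01 e -> bounded01 (Delta e).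
Proof.
move=> e01 a b; have e0 x y : 0 <= e x y by case/andP: (e01 x y).
have [lab|lab] := eqVneq (ell a) (ell b); last by rewrite Delta_diff_label // ler01 lexx.
have Cp := coupling_prod (Htau a) (Htau b).
rewrite (Delta_ge (c := 0)) //=; last first.
  by move=> w Cw; apply: (expect_ge0 (f := fun p => e p.1 p.2) Cw.1) => p.
apply: le_trans (Delta_le_expect e0 lab Cp) _.
by apply: (expect_le1 Cp.1) => p; case/andP: (e01 p.1 p.2).
Qed.

(* Knaster-Tarski: the pointwise infimum of the bounded pre-fixed points below [e]
   is itself a pre-fixed point, hence a fixed point. *)
Lemma bisim_distance_le_prefixpoint d e : is_bisim_distance tau ell d ->
  bounded01 e -> (forall a b, Delta e a b <= e a b) -> forall a b, d a b <= e a b.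
Proof.
case=> _ _ dmin e01 epre.
pose P x := [/\ bounded01 x, forall a b, Delta x a b <= x a b & forall a b, x a b <= e a b].
have Pe : P e by [].
pose m a b := inf [set x a b | x in P].
have m_le x : P x -> forall a b, m a b <= x a b.
  move=> Px a b; apply: ge_inf; last by exists x.
  by exists 0 => _ [y [y01 _ _] <-]; case/andP: (y01 a b).
have m0 a b : 0 <= m a b.
  apply: lb_le_inf; first by exists (e a b), e.
  by move=> _ [x [x01 _ _] <-]; case/andP: (x01 a b).
have m01 : bounded01 m.
  by move=> a b; rewrite m0 (le_trans (m_le _ Pe a b)) //; case/andP: (e01 a b).
have Dm a b : Delta m a b <= m a b.
  apply: lb_le_inf; first by exists (e a b), e.
  move=> _ [x [x01 xpre xe] <-].
  exact: le_trans (le_Delta m0 (m_le x (And3 x01 xpre xe)) a b) (xpre a b).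
have PDm : P (Delta m).
  split; [exact: Delta_bounded01 | | by move=> a b; apply: le_trans (Dm a b) (m_le _ Pe a b)].
  by apply: le_Delta Dm => a b; case/andP: (Delta_bounded01 m01 a b).
have fixm a b : Delta m a b = m a b by apply/eqP; rewrite eq_le Dm m_le.
by move=> a b; apply: le_trans (dmin m m01 fixm a b) (m_le _ Pe a b).
Qed.

Section Reachability.
Variables (T : S * S -> S * S -> R) (Z : set (S * S)).
Hypothesis HT : is_policy tau ell T.
Local Notation reach_n := (reach_n tau ell T Z).
Local Notation reach := (reach tau ell T Z).

Lemma reach_nS n p : reach_n n.+1 p =
  if `[< Z p >] then 1
  else if `[< S2_q tau ell p >] then expect (T p) (reach_n n) else 0.
Proof. by []. Qed.

Lemma reach_n_bounded n p : 0 <= reach_n n p <= 1.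
Proof.
elim: n p => [|n IH] p; first by rewrite /=; case: ifP; rewrite ?lexx ?ler01.
rewrite reach_nS; case: ifP => _; first by rewrite lexx ler01.
case: ifP => [/asboolP qp|_]; last by rewrite lexx ler01.
have wd := (HT qp).1.
by rewrite expect_ge0 ?expect_le1 // => q; case/andP: (IH q).
Qed.

Lemma le_reach_n p : {homo reach_n^~ p : m n / (m <= n)%N >-> m <= n}.
Proof.
apply: homo_leq => [//|? ? ?|n]; first exact: le_trans.
elim: n p => [|n IH] p.
  rewrite reach_nS /=; case: ifP => // _; case: ifP => [/asboolP qp|_] //.
  by apply: (expect_ge0 (HT qp).1) => q; case/andP: (reach_n_bounded 0 q).
rewrite reach_nS [leRHS]reach_nS; case: ifP => // _; case: ifP => [/asboolP qp|_] //.
by apply: (le_expect (HT qp).1) => q _.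
Qed.

Lemma has_sup_reach_n p : has_sup (range (reach_n^~ p)).
Proof.
split; first by exists (reach_n 0 p), 0%N.
by exists 1 => _ [n _ <-]; case/andP: (reach_n_bounded n p).
Qed.

Lemma reach_n_le_reach n p : reach_n n p <= reach p.
Proof. by apply: (sup_upper_bound (has_sup_reach_n p)); exists n. Qed.

Lemma reach_ge0 p : 0 <= reach p.
Proof. by apply: le_trans (reach_n_le_reach 0 p); case/andP: (reach_n_bounded 0 p). Qed.

Lemma reach_le1 p : reach p <= 1.
Proof.
apply: ge_sup; first by exists (reach_n 0 p), 0%N.
by move=> _ [n _ <-]; case/andP: (reach_n_bounded n p).
Qed.

Lemma reach_target p : Z p -> reach p = 1.
Proof.
move=> Zp; apply/eqP; rewrite eq_le reach_le1 /=.
by apply: le_trans (reach_n_le_reach 0 p); rewrite /= asboolT.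
Qed.

Lemma expect_reach_le p : S2_q tau ell p -> ~ Z p -> expect (T p) reach <= reach p.
Proof.
move=> qp nZ; have wd := (HT qp).1.
apply/ler_addgt0Pr => eps eps0.
have [N HN] := sup_approx_seq (fsupp (T p)) eps0 has_sup_reach_n le_reach_n.
apply: le_trans (_ : expect (T p) (fun q => reach_n N q + eps) <= _).
  apply: (le_expect wd) => q wq; rewrite -lerBlDr; apply: HN.
  by rewrite mem_fsupp; last exact: wd.2.1.
rewrite expectD // expect_cst // lerD2r.
by apply: le_trans (reach_n_le_reach N.+1 p); rewrite reach_nS asboolF // asboolT.
Qed.

End Reachability.

Section BisimulationCoupling.
Variable Rb : S -> S -> Prop.
Hypothesis HRb : prob_bisim tau ell Rb.

Definition class_mass (a u : S) : R := \sum_(y \in [set y | Rb u y]) tau a y.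

(* The product coupling conditioned on each bisimilarity class.  No case split on
   [class_mass a u = 0] is needed: then [tau a u = 0] too, and [x / 0 = 0]. *)
Definition bisim_coupling (a b : S) (p : S * S) : R :=
  if `[< Rb p.1 p.2 >] then tau a p.1 * tau b p.2 / class_mass a p.1 else 0.

Lemma class_mass_ge a u : tau a u <= class_mass a u.
Proof.
have [t0 [tfin _]] := Htau a; case: HRb => Rr _ _ _.
by apply: ler_fsum_term => //; exact: Rr.
Qed.

Lemma class_mass_related a u v : Rb u v -> class_mass a u = class_mass a v.
Proof.
case: HRb => _ Rs Rt _ uv; rewrite /class_mass.
have -> // : [set y | Rb u y] = [set y | Rb v y].
by apply/seteqP; split=> y /=; [apply: Rt (Rs _ _ uv) | apply: Rt uv].
Qed.

Lemma class_mass_bisim a b u : Rb a b -> class_mass a u = class_mass b u.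
Proof. by case: HRb => _ _ _ Rp /Rp[_ Hcl]; exact: Hcl. Qed.

Lemma bisim_coupling_swap a b u v : Rb a b ->
  bisim_coupling a b (u, v) = bisim_coupling b a (v, u).
Proof.
case: HRb => _ Rs _ _ ab; rewrite /bisim_coupling /=.
have [uv|nuv] := pselect (Rb u v); last by rewrite !asboolF // => /Rs.
rewrite !asboolT //; last exact: Rs.
by rewrite [tau a u * _]mulrC (class_mass_bisim u ab) (class_mass_related b uv).
Qed.

Lemma bisim_coupling_row a b u : Rb a b ->
  \sum_(v \in [set: S]) bisim_coupling a b (u, v) = tau a u.
Proof.
move=> ab; rewrite /bisim_coupling /=.
have [c0|cn0] := eqVneq (class_mass a u) 0.
  have tu0 : tau a u = 0.
    by apply/eqP; rewrite eq_le ((Htau a).1 u) andbT -c0 class_mass_ge.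
  by rewrite tu0; apply: fsbig1 => v _; rewrite !mul0r if_same.
transitivity (tau a u / class_mass a u * class_mass b u); last first.
  by rewrite -(class_mass_bisim u ab) divfK.
rewrite /class_mass mulr_fsumr [RHS]fsbig_mkcond; apply: eq_fsbigr => v _.
rewrite /patch; case: (boolP `[< Rb u v >]) => [/asboolP uv|/asboolP nuv].
  by rewrite mem_set // mulrAC.
by rewrite memNset.
Qed.

Lemma bisim_coupling_col a b v : Rb a b ->
  \sum_(u \in [set: S]) bisim_coupling a b (u, v) = tau b v.
Proof.
case: HRb => _ Rs _ _ ab; rewrite -(bisim_coupling_row v (Rs _ _ ab)).
by apply: eq_fsbigr => u _; exact: bisim_coupling_swap.
Qed.

Lemma bisim_coupling_supp a b p : bisim_coupling a b p != 0 ->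
  [/\ Rb p.1 p.2, tau a p.1 != 0 & tau b p.2 != 0].
Proof.
rewrite /bisim_coupling; case: asboolP => [uv|_]; last by rewrite eqxx.
by rewrite !mulf_eq0 => /norP[/norP[]].
Qed.

Lemma bisim_couplingP a b : Rb a b -> coupling (tau a) (tau b) (bisim_coupling a b).
Proof.
move=> ab; apply: coupling_of_marginals => //.
- move=> p; rewrite /bisim_coupling; case: ifP => // _.
  by rewrite divr_ge0 ?mulr_ge0 ?((Htau _).1 _) // (le_trans ((Htau a).1 p.1)) ?class_mass_ge.
- by move=> p /bisim_coupling_supp[].
- by move=> u; exact: bisim_coupling_row.
- by move=> v; exact: bisim_coupling_col.
Qed.

End BisimulationCoupling.

Lemma bisimilar_coupling a b : bisimilar tau ell a b ->
  exists2 w, coupling (tau a) (tau b) w &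
    forall p, w p != 0 -> bisimilar tau ell p.1 p.2.
Proof.
case=> Rb [HRb ab]; exists (bisim_coupling Rb a b); first exact: bisim_couplingP.
by move=> p /bisim_coupling_supp[? _ _]; exists Rb.
Qed.

Lemma bisim_label a b : bisimilar tau ell a b -> ell a = ell b.
Proof. by case=> Rb [[_ _ _ Rp] /Rp[]]. Qed.

Lemma reach_S2_1_bisimilar T p : is_policy tau ell T ->
  bisimilar tau ell p.1 p.2 -> reach tau ell T (S2_1 ell) p = 0.
Proof.
move=> HT bp; have nZ : ~ S2_1 ell p by rewrite /S2_1 /= (bisim_label bp) eqxx.
have nq : ~ S2_q tau ell p by apply; left.
have r0 n : reach_n tau ell T (S2_1 ell) n p = 0.
  by case: n => [|n] /=; rewrite asboolF // asboolF.
apply/eqP; rewrite eq_le -{2}(r0 0%N) reach_n_le_reach // andbT.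
by apply: ge_sup => [|_ [n _ <-]]; [exists 0, 0%N | rewrite r0].
Qed.

Lemma reach_S2_1_prefixpoint T : is_policy tau ell T -> forall a b,
  Delta (fun x y => reach tau ell T (S2_1 ell) (x, y)) a b <=
  reach tau ell T (S2_1 ell) (a, b).
Proof.
move=> HT a b; set r := reach tau ell T (S2_1 ell).
have [lab|lab] := eqVneq (ell a) (ell b); last by rewrite Delta_diff_label // /r reach_target.
have r0 x y : 0 <= r (x, y) by exact: reach_ge0.
have [bab|nbab] := pselect (bisimilar tau ell a b).
  have [w Cw wb] := bisimilar_coupling bab.
  apply: le_trans (Delta_le_expect r0 lab Cw) _.
  suff -> : expect w (fun p => r (p.1, p.2)) = 0 by exact: reach_ge0.
  apply: fsbig1 => p _; have [->|/wb bp] := eqVneq (w p) 0; first by rewrite mul0r.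
  by rewrite -surjective_pairing /r reach_S2_1_bisimilar // mulr0.
have qab : S2_q tau ell (a, b) by case; [exact: nbab | rewrite /S2_1 /= lab eqxx].
apply: le_trans (Delta_le_expect r0 lab (HT _ qab)) _.
apply: le_trans (expect_reach_le HT qab _); last by rewrite /S2_1 /= lab eqxx.
by apply: (le_expect (HT _ qab).1) => -[x y] _.
Qed.

Lemma bisim_distance_le_reach d T : is_bisim_distance tau ell d ->
  is_policy tau ell T -> forall a b, d a b <= reach tau ell T (S2_1 ell) (a, b).
Proof.
move=> Hd HT; apply: (bisim_distance_le_prefixpoint Hd); last exact: reach_S2_1_prefixpoint.
by move=> a b; rewrite reach_ge0 ?reach_le1.
Qed.

Lemma reach_n_S2_1_S2_0 T n p : is_policy tau ell T ->
  reach_n tau ell T (S2_1 ell) n p + reach_n tau ell T (S2_0 tau ell) n p <= 1.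
Proof.
move=> HT; elim: n p => [|n IH] p.
  rewrite /=; case: (asboolP (S2_1 ell p)) => h1; case: (asboolP (S2_0 tau ell p)) => h0;
    rewrite ?addr0 ?add0r ?lexx ?ler01 //.
  by move: h1; rewrite /S2_1 /= (bisim_label h0) eqxx.
rewrite !reach_nS.
case: (asboolP (S2_1 ell p)) => h1; case: (asboolP (S2_0 tau ell p)) => h0.
- by move: h1; rewrite /S2_1 /= (bisim_label h0) eqxx.
- by rewrite asboolF ?addr0 //; apply; right.
- by rewrite asboolF ?add0r //; apply; left.
case: (asboolP (S2_q tau ell p)) => hq; last by rewrite addr0 ler01.
by have wd := (HT _ hq).1; rewrite -expectD // expect_le1.
Qed.

Lemma reach_S2_1_le T p : is_policy tau ell T ->
  reach tau ell T (S2_1 ell) p <= 1 - reach tau ell T (S2_0 tau ell) p.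
Proof.
move=> HT; apply: ge_sup => [|_ [n _ <-]].
  by exists (reach_n tau ell T (S2_1 ell) 0 p), 0%N.
rewrite lerBrDr addrC -lerBrDr; apply: ge_sup => [|_ [m _ <-]].
  by exists (reach_n tau ell T (S2_0 tau ell) 0 p), 0%N.
have le1 := le_reach_n (S2_1 ell) HT p (leq_maxl n m).
have le0 := le_reach_n (S2_0 tau ell) HT p (leq_maxr n m).
have := reach_n_S2_1_S2_0 (maxn n m) p HT; lra.
Qed.

(* With an optimal coupling for [d] at every pair, [d] dominates the
   finite-horizon reachability probabilities by induction on the horizon. *)
Lemma exists_policy_reach_le d : is_bisim_distance tau ell d ->
  exists2 T, is_policy tau ell T & forall p, reach tau ell T (S2_1 ell) p <= d p.1 p.2.
Proof.
move=> Hd; have [d01 dfix _] := Hd.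
have d0 x y : 0 <= d x y by case/andP: (d01 x y).
have d1 q : S2_1 ell q -> d q.1 q.2 = 1 by move=> h; rewrite -dfix Delta_diff_label.
have opt p : exists w, S2_q tau ell p ->
    coupling (tau p.1) (tau p.2) w /\ expect w (fun q => d q.1 q.2) <= d p.1 p.2.
  have [w Cw wmin] := exists_optimal_coupling (Htau p.1) (Htau p.2) (fun q => d q.1 q.2).
  exists w => qp; split => //.
  have lab : ell p.1 = ell p.2 by apply/eqP; apply: contra_notT qp => h; right.
  by rewrite -[leRHS]dfix; apply: Delta_ge lab _ => w' /wmin.
have [T HT] := choice opt.
exists T => [p qp|p]; first exact: (HT p qp).1.
apply: ge_sup => [|_ [n _ <-]]; first by exists (reach_n tau ell T (S2_1 ell) 0 p), 0%N.
elim: n p => [|n IH] p.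
  by rewrite /=; case: asboolP => [/d1 ->|_]; [exact: lexx | exact: d0].
rewrite reach_nS; case: asboolP => [/d1 ->|_]; first exact: lexx.
case: asboolP => [qp|_]; last exact: d0.
have [Cw Tle] := HT p qp; apply: le_trans Tle.
by apply: (le_expect Cw.1) => q _.
Qed.

End LMC.

Theorem mainTheorem10 (R : realType) (S : countType) (L : finType)
    (tau : S -> S -> R) (ell : S -> L)
    (Htau : forall s, is_distr (tau s))
    (d : S -> S -> R) (Hd : is_bisim_distance tau ell d) (s t : S) :
  (d s t < 1 <->
     exists T, is_policy tau ell T /\ reach tau ell T (S2_1 ell) (s, t) < 1) /\
  ((exists T, is_policy tau ell T /\ 0 < reach tau ell T (S2_0 tau ell) (s, t)) ->
     d s t < 1).
Proof.
have d_le_reach T : is_policy tau ell T -> d s t <= reach tau ell T (S2_1 ell) (s, t).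
  by move=> HT; exact: (bisim_distance_le_reach Htau Hd HT s t).
split; [split|].
- move=> dlt; have [T HT Tle] := exists_policy_reach_le Htau Hd.
  by exists T; split => //; apply: le_lt_trans (Tle (s, t)) dlt.
- by case=> T [HT rlt]; apply: le_lt_trans (d_le_reach T HT) rlt.
- case=> T [HT r0]; apply: le_lt_trans (d_le_reach T HT) _.
  by apply: le_lt_trans (reach_S2_1_le _ HT) _; rewrite ltrBlDr ltrDl.
Qed.
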